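(* Fix $n$, $\alpha$ and $\lambda\in\mathbb{C}$ with $D-\lambda I$ invertible, $\Delta_n(\lambda,\alpha)=0$ and $D_1\Delta_n(\lambda,\alpha)\ne0$. Let $p=(1,(D-\lambda I)^{-1}D\mathbf 1)$ and $$q=(q_*,\tilde q),\qquad q_*=\frac1{D_1\Delta_n(\lambda,\alpha)},\qquad \tilde q=\frac1{D_1\Delta_n(\lambda,\alpha)}(\lambda I-D^T)^{-1}\begin{pmatrix}L(\alpha)\ell_1\\\vdots\\L(\alpha)\ell_n\end{pmatrix}.$$ Then $A_n(\alpha)^Tq=\lambda q$, $q\cdot p=1$, and the spectral projection of $A_n(\alpha)$ onto the eigenspace of $\lambda$ is $(\zeta_0,\zeta)\mapsto D_1\Delta_n(\lambda,\alpha)^{-1}\big(\zeta_0+L(\alpha)P(\lambda I-D)^{-1}\zeta\big)p=(q\cdot(\zeta_0,\zeta))\,p$. If moreover $\alpha\mapsto L(\alpha)$ is differentiable, then $$q\cdot A_n'(\alpha)p=-D_1\Delta_n(\lambda,\alpha)^{-1}D_2\Delta_n(\lambda,\alpha).$$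
   Context: $X=C([-1,0],\mathbb{R})$; $L(\alpha):X\to\mathbb{R}$ is bounded linear, extended complex-linearly. A mesh $-1\le\theta_n<\dots<\theta_1<\theta_0=0$ is given, with Lagrange polynomials $\ell_j(\theta)=\prod_{0\le m\le n,\,m\neq j}\frac{\theta-\theta_m}{\theta_j-\theta_m}$, $j=0,\dots,n$. $D$ is the $n\times n$ matrix with entries $D_{ij}=\ell_j'(\theta_i)$, $i,j=1,\dots,n$; $\mathbf 1=(1,\dots,1)^T\in\mathbb{R}^n$; $I$ identity. For $y\in\mathbb{C}^n$, $Py=\sum_{j=1}^ny_j\ell_j$, $P_0(y_0,y)=y_0\ell_0+Py$. $A_n(\alpha)(y_0,y)=(L(\alpha)P_0(y_0,y),\,Dy-y_0D\mathbf 1)$ on $\mathbb{C}\times\mathbb{C}^n$, $A_n'$ its derivative in $\alpha$. $\pi_n(\lambda)=\ell_0+P(D-\lambda I)^{-1}D\mathbf 1$, $\Delta_n(\lambda,\alpha)=\lambda-L(\alpha)\pi_n(\lambda)$; $D_1,D_2$ are partial derivatives in $\lambda$ and $\alpha$. For $v,w\in\mathbb{C}^m$, $v\cdot w=\sum_iv_iw_i$. *)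

From HB Require Import structures.
From mathcomp Require Import all_boot all_order all_algebra.
From mathcomp Require Import complex.
From mathcomp Require Import all_classical all_reals all_analysis.
Import Order.TTheory GRing.Theory Num.Theory.
Import numFieldNormedType.Exports.

Set Implicit Arguments.
Unset Strict Implicit.
Unset Printing Implicit Defensive.

Local Open Scope ring_scope.
Local Open Scope classical_set_scope.
Local Open Scope complex_scope.

(** * The state space X = C([-1,0], R)
    Elements of X are represented by functions R -> R that are continuous on
    [-1,0]; only their values on [-1,0] matter (see [bounded_linear_X]). *)
Definition inX (R : realType) (f : R -> R) : Prop :=
  {within `[(-1)%R, 0%R], continuous f}.

Definition supnorm_le (R : realType) (f : R -> R) (c : R) : Prop :=
  forall t : R, -1 <= t <= 0 -> `|f t| <= c.

(** A bounded linear functional on X = C([-1,0],R), given by its action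
    on representatives (it must not depend on values outside [-1,0]). *)
Definition bounded_linear_X (R : realType) (Lam : (R -> R) -> R) : Prop :=
  [/\ (forall (a : R) (f g : R -> R), inX f -> inX g ->
          Lam (fun t => a * f t + g t) = a * Lam f + Lam g),
      (forall f g : R -> R, inX f -> inX g ->
          (forall t, -1 <= t <= 0 -> f t = g t) -> Lam f = Lam g)
    & (exists M : R, forall (f : R -> R) (c : R), inX f -> supnorm_le f c ->
          `|Lam f| <= M * c)].

Definition Lc (R : realType) (Lam : (R -> R) -> R) (u : R -> R[i]) : R[i] :=
  Lam (fun t => complex.Re (u t)) +i* Lam (fun t => complex.Im (u t)).

(** alpha |-> L(alpha) is differentiable (in the operator norm of X^* ). *)
Definition L_differentiable (R : realType) (L : R -> (R -> R) -> R) : Prop :=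
  exists L' : R -> (R -> R) -> R,
    (forall a, bounded_linear_X (L' a)) /\
    forall a : R, forall e : R, 0 < e -> exists d : R, 0 < d /\
      forall h : R, 0 < `|h| < d ->
        forall f : R -> R, inX f -> supnorm_le f 1 ->
          `|L (a + h) f - L a f - h * L' a f| <= e * `|h|.

Definition is_mesh (R : realType) (n : nat) (th : 'I_n.+1 -> R) : Prop :=
  [/\ th ord0 = 0,
      (forall i j : 'I_n.+1, (i < j)%N -> th j < th i)
    & -1 <= th ord_max].

Definition lagr (R : realType) (n : nat) (th : 'I_n.+1 -> R) (j : 'I_n.+1)
  : {poly R} :=
  \prod_(m < n.+1 | m != j) (('X - (th m)%:P) * ((th j - th m)^-1)%:P).

(** D_{ij} = l_j'(th_i), i,j = 1..n (index k : 'I_n stands for k+1). *)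
Definition Dmat (R : realType) (n : nat) (th : 'I_n.+1 -> R) : 'M[R[i]]_n :=
  \matrix_(i < n, j < n) ((lagr th (lift ord0 j))^`()).[th (lift ord0 i)]%:C.

Definition ones (R : realType) (n : nat) : 'cV[R[i]]_n := const_mx 1.

Definition Pn_fun (R : realType) (n : nat) (th : 'I_n.+1 -> R) (y : 'cV[R[i]]_n)
  : R -> R[i] :=
  fun t => \sum_(j < n) y j 0 * ((lagr th (lift ord0 j)).[t])%:C.

Definition P0fun (R : realType) (n : nat) (th : 'I_n.+1 -> R) (y0 : R[i])
  (y : 'cV[R[i]]_n) : R -> R[i] :=
  fun t => y0 * ((lagr th ord0).[t])%:C + Pn_fun th y t.

(** Elements of C x C^n are column vectors of size 1 + n:
    the first entry is y_0, the remaining block is y. *)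
Definition top (R : realType) (n : nat) (v : 'cV[R[i]]_(1 + n)) : R[i] :=
  usubmx v 0 0.
Definition bot (R : realType) (n : nat) (v : 'cV[R[i]]_(1 + n)) : 'cV[R[i]]_n :=
  dsubmx v.
Definition pairv (R : realType) (n : nat) (y0 : R[i]) (y : 'cV[R[i]]_n)
  : 'cV[R[i]]_(1 + n) := col_mx (y0%:M) y.

Definition An_map (R : realType) (n : nat) (th : 'I_n.+1 -> R)
  (Lam : (R -> R) -> R) (v : 'cV[R[i]]_(1 + n)) : 'cV[R[i]]_(1 + n) :=
  pairv (Lc Lam (P0fun th (top v) (bot v)))
        (Dmat th *m bot v - top v *: (Dmat th *m @ones R n)).

Definition An (R : realType) (n : nat) (th : 'I_n.+1 -> R)
  (Lam : (R -> R) -> R) : 'M[R[i]]_(1 + n) :=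
  \matrix_(i, j) (An_map th Lam (delta_mx j 0)) i 0.

Definition pin (R : realType) (n : nat) (th : 'I_n.+1 -> R) (z : R[i])
  : R -> R[i] :=
  fun t => ((lagr th ord0).[t])%:C
           + Pn_fun th (invmx (Dmat th - z%:M) *m (Dmat th *m @ones R n)) t.

Definition Deltan (R : realType) (n : nat) (th : 'I_n.+1 -> R)
  (Lam : (R -> R) -> R) (z : R[i]) : R[i] :=
  z - Lc Lam (pin th z).

(** v . w = sum_i v_i w_i (bilinear, no conjugation) *)
Definition dotv (K : pzRingType) (m : nat) (v w : 'cV[K]_m) : K :=
  \sum_(i < m) v i 0 * w i 0.

Definition has_derivC (R : realType) (F : R[i] -> R[i]) (z d : R[i]) : Prop :=
  is_derive (z : R[i]^o) (1 : R[i]^o) (F : R[i]^o -> R[i]^o) (d : R[i]^o).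

Definition has_derivRC (R : realType) (F : R -> R[i]) (a : R) (d : R[i]) : Prop :=
  (fun h : R => ((F (a + h) - F a) / h%:C : R[i]^o)) @ (0 : R)^' --> (d : R[i]^o).

Definition has_derivM (R : realType) (m : nat) (F : R -> 'M[R[i]]_m) (a : R)
  (D' : 'M[R[i]]_m) : Prop :=
  forall i j, has_derivRC (fun b => F b i j) a (D' i j).

(** Spectral (Riesz) projection of a square matrix A onto the generalized
    eigenspace of lam: the linear projection Pi onto ker (A - lam)^m along
    ran (A - lam)^m, m the size of A. *)
Definition shiftpow (K : pzRingType) (m : nat) (A : 'M[K]_m) (lam : K)
  (v : 'cV[K]_m) : 'cV[K]_m :=
  iter m (fun u => A *m u - lam *: u) v.

Definition is_spectral_projection (K : pzRingType) (m : nat) (A : 'M[K]_m)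
  (lam : K) (Pi : 'cV[K]_m -> 'cV[K]_m) : Prop :=
  [/\ (forall (a : K) (u v : 'cV[K]_m), Pi (a *: u + v) = a *: Pi u + Pi v),
      (forall v, Pi (Pi v) = Pi v),
      (forall v, (exists u, v = Pi u) <-> shiftpow A lam v = 0)
    & (forall v, Pi v = 0 <-> exists w, v = shiftpow A lam w)].

From HB Require Import structures.
From mathcomp Require Import all_boot all_order all_algebra.
From mathcomp Require Import complex.
From mathcomp Require Import all_classical all_reals all_analysis.
From mathcomp Require Import ring.
Import Order.TTheory GRing.Theory Num.Theory.
Import numFieldNormedType.Exports.
Local Open Scope ring_scope.
Local Open Scope complex_scope.

(* In coordinates (y_0, y) of C x C^n, A_n(alpha) is the
   bordered matrix [[c0, c], [-b, D]] with c0 = L l_0, c = (L l_j)_j, b = D 1,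
   and Delta_n(z) = z - c0 - c (D - z)^-1 b is the Schur complement of D - z.
   1. Computing the complex extension of L on combinations of polynomials
      identifies A_n and Delta_n with these bordered objects.
   2. If the Schur complement vanishes at lam and d1 = 1 - c (D - lam)^-2 b is
      nonzero, then p, q are right/left eigenvectors with q.p = 1, the kernel
      of A - lam is spanned by p and its range is q^perp; for such a simple
      eigenvalue v |-> (q.v) p is the spectral projection.
   3. Resolvent entries are rational functions (Cramer), hence continuous, so
      the complex derivative of the Schur complement at lam is d1.
   4. Only the first row of A_n(a) depends on a, and Delta_n(lam, a) is lam
      minus the first entry of A_n(a) p; differentiating in a yields
      q.A_n'(alpha) p = - d1^-1 D_2 Delta_n. *)

Section ComplexParts.
Context {R : rcfType}.

Lemma Re_sum (I : Type) (r : seq I) (E : I -> R[i]) :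
  complex.Re (\sum_(i <- r) E i) = \sum_(i <- r) complex.Re (E i).
Proof. by apply: (big_ind2 (fun x y => complex.Re x = y)) => // -[a b] y [c d] y' <- <-. Qed.

Lemma Im_sum (I : Type) (r : seq I) (E : I -> R[i]) :
  complex.Im (\sum_(i <- r) E i) = \sum_(i <- r) complex.Im (E i).
Proof. by apply: (big_ind2 (fun x y => complex.Im x = y)) => // -[a b] y [c d] y' <- <-. Qed.

Lemma Re_mul_real (z : R[i]) (r : R) : complex.Re (z * r%:C) = complex.Re z * r.
Proof. by case: z => a b /=; rewrite mulr0 subr0. Qed.

Lemma Im_mul_real (z : R[i]) (r : R) : complex.Im (z * r%:C) = complex.Im z * r.
Proof. by case: z => a b /=; rewrite mulr0 add0r. Qed.

End ComplexParts.

Section ComplexExtension.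
Context {R : realType} {Lam : (R -> R) -> R}.
Hypothesis Lam_bounded : bounded_linear_X Lam.

Lemma inX_horner (p : {poly R}) : inX (fun t => p.[t]).
Proof. exact/continuous_subspaceT/continuous_horner. Qed.

Lemma Lam_horner_lin (a : R) (p q : {poly R}) :
  Lam (fun t => (a *: p + q).[t]) = a * Lam (fun t => p.[t]) + Lam (fun t => q.[t]).
Proof.
case: Lam_bounded => lin _ _; rewrite -lin; try exact: inX_horner.
by congr Lam; apply/funext => t; rewrite hornerD hornerZ.
Qed.

Lemma Lam_horner_sum (I : Type) (r : seq I) (a : I -> R) (F : I -> {poly R}) :
  Lam (fun t => (\sum_(i <- r) a i *: F i).[t])
  = \sum_(i <- r) a i * Lam (fun t => (F i).[t]).
Proof.
elim: r => [|i r IH]; last by rewrite !big_cons Lam_horner_lin IH.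
rewrite !big_nil; have := Lam_horner_lin 1 0 0.
by rewrite addr0 mul1r scaler0 => /eqP; rewrite -subr_eq subrr => /eqP <-.
Qed.

Lemma Lc_horner_sum (m : nat) (z : 'I_m -> R[i]) (F : 'I_m -> {poly R}) :
  Lc Lam (fun t => \sum_(k < m) z k * ((F k).[t])%:C)
  = \sum_(k < m) z k * (Lam (fun t => (F k).[t]))%:C.
Proof.
have ReE : (fun t => complex.Re (\sum_(k < m) z k * ((F k).[t])%:C))
         = (fun t => (\sum_(k < m) complex.Re (z k) *: F k).[t]).
  apply/funext => t; rewrite Re_sum horner_sum.
  by apply: eq_bigr => k _; rewrite Re_mul_real hornerZ.
have ImE : (fun t => complex.Im (\sum_(k < m) z k * ((F k).[t])%:C))
         = (fun t => (\sum_(k < m) complex.Im (z k) *: F k).[t]).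
  apply/funext => t; rewrite Im_sum horner_sum.
  by apply: eq_bigr => k _; rewrite Im_mul_real hornerZ.
rewrite /Lc ReE ImE !Lam_horner_sum.
apply/eqP; rewrite eq_complex /= Re_sum Im_sum.
by apply/andP; split; apply/eqP; apply: eq_bigr => k _; rewrite ?Re_mul_real ?Im_mul_real.
Qed.

End ComplexExtension.

Definition bordered {K : pzRingType} {n : nat} (c0 : K) (c : 'rV[K]_n)
  (b : 'cV[K]_n) (D : 'M[K]_n) : 'M[K]_(1 + n) :=
  block_mx c0%:M c (- b) D.

Definition bordered_char {K : fieldType} {n : nat} (c0 : K) (c : 'rV[K]_n)
  (b : 'cV[K]_n) (D : 'M[K]_n) (z : K) : K :=
  z - (c0 + (c *m (invmx (D - z%:M) *m b)) 0 0).

Lemma bordered_char_row {K : fieldType} {n : nat} (c0 : K) (c : 'rV[K]_n)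
  (b : 'cV[K]_n) (D : 'M[K]_n) (z : K) :
  bordered_char c0 c b D z = z - \sum_(k < 1 + n)
    bordered c0 c b D (lshift n 0) k * col_mx 1%:M (invmx (D - z%:M) *m b) k 0.
Proof.
have top_row : (bordered c0 c b D *m col_mx 1%:M (invmx (D - z%:M) *m b)) (lshift n 0) 0
    = c0 + (c *m (invmx (D - z%:M) *m b)) 0 0.
  rewrite /bordered mul_block_col col_mxEu mulmx1 [LHS]mxE; congr (_ + _).
  by rewrite mxE mulr1n.
by rewrite /bordered_char -top_row mxE.
Qed.

Lemma bordered_bottom_rows {K : pzRingType} {n : nat} (c0 c0' : K) (c c' : 'rV[K]_n)
  (b : 'cV[K]_n) (D : 'M[K]_n) (i : 'I_n) (j : 'I_(1 + n)) :
  bordered c0 c b D (rshift 1 i) j = bordered c0' c' b D (rshift 1 i) j.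
Proof. by rewrite /bordered !block_mxEv !col_mxEd. Qed.

Definition Lcoef {R : realType} {n : nat} (th : 'I_n.+1 -> R) (Lam : (R -> R) -> R)
  (j : 'I_n.+1) : R[i] := (Lam (fun t => (lagr th j).[t]))%:C.

Definition Lrow {R : realType} {n : nat} (th : 'I_n.+1 -> R) (Lam : (R -> R) -> R)
  : 'rV[R[i]]_n := \row_j Lcoef th Lam (lift ord0 j).

Section BorderedForm.
Context {R : realType} {n : nat} (th : 'I_n.+1 -> R) {Lam : (R -> R) -> R}.
Hypothesis Lam_bounded : bounded_linear_X Lam.

Lemma Lc_Pn (y : 'cV[R[i]]_n) : Lc Lam (Pn_fun th y) = (Lrow th Lam *m y) 0 0.
Proof.
rewrite /Pn_fun Lc_horner_sum // mxE.
by apply: eq_bigr => j _; rewrite mxE mulrC.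
Qed.

Lemma Lc_P0 (y0 : R[i]) (y : 'cV[R[i]]_n) :
  Lc Lam (P0fun th y0 y) = y0 * Lcoef th Lam ord0 + (Lrow th Lam *m y) 0 0.
Proof.
pose z (k : 'I_n.+1) := if unlift ord0 k is Some j then y j 0 else y0.
have -> : P0fun th y0 y = fun t => \sum_(k < n.+1) z k * ((lagr th k).[t])%:C.
  apply/funext => t; rewrite big_ord_recl /z unlift_none; congr (_ + _).
  by apply: eq_bigr => j _; rewrite liftK.
rewrite Lc_horner_sum // big_ord_recl /z unlift_none mxE; congr (_ + _).
by apply: eq_bigr => j _; rewrite liftK mxE mulrC.
Qed.

Lemma An_bordered :
  An th Lam = bordered (Lcoef th Lam ord0) (Lrow th Lam) (Dmat th *m ones R n) (Dmat th).
Proof.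
have An_mapE v : An_map th Lam v
    = bordered (Lcoef th Lam ord0) (Lrow th Lam) (Dmat th *m ones R n) (Dmat th) *m v.
  rewrite /An_map /bordered -[in RHS](vsubmxK v) mul_block_col /pairv Lc_P0.
  have Eu : usubmx v = (top v)%:M by apply: mx11_scalar.
  rewrite Eu /bot; congr col_mx.
    rewrite raddfD /= mulrC scalar_mxM; congr (_ + _); exact/esym/mx11_scalar.
  by rewrite mul_mx_scalar scalerN addrC.
by apply/matrixP => i j; rewrite mxE An_mapE -colE mxE.
Qed.

Lemma Deltan_bordered :
  Deltan th Lam
  = bordered_char (Lcoef th Lam ord0) (Lrow th Lam) (Dmat th *m ones R n) (Dmat th).
Proof.
apply/funext => z; rewrite /Deltan /bordered_char -[in RHS](mul1r (Lcoef th Lam _)) -Lc_P0.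
by congr (_ - Lc Lam _); apply/funext => t; rewrite /pin /P0fun mul1r.
Qed.

End BorderedForm.

Lemma dotvE {K : comPzRingType} {m : nat} (u v : 'cV[K]_m) :
  dotv u v = (u^T *m v) 0 0.
Proof. by rewrite mxE; apply: eq_bigr => i _; rewrite mxE. Qed.

Lemma dotv_lin {K : comPzRingType} {m : nat} (x u v : 'cV[K]_m) (a : K) :
  dotv x (a *: u + v) = a * dotv x u + dotv x v.
Proof. by rewrite !dotvE mulmxDr -scalemxAr !mxE. Qed.

Lemma dotvZ {K : comPzRingType} {m : nat} (x u : 'cV[K]_m) (a : K) :
  dotv x (a *: u) = a * dotv x u.
Proof. by rewrite !dotvE -scalemxAr mxE. Qed.

Lemma dotv_top_only {K : comPzRingType} {n : nat} (a : K) (u : 'cV[K]_n)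
  (x : 'cV[K]_(1 + n)) :
  (forall i, x (rshift 1 i) 0 = 0) -> dotv (col_mx a%:M u) x = a * x (lshift n 0) 0.
Proof.
move=> x_bot; rewrite /dotv big_split_ord /= big_ord1 big1 ?addr0 => [|i _].
  by rewrite col_mxEu mxE mulr1n.
by rewrite x_bot mulr0.
Qed.

Section SimpleEigenvalue.
Context {K : fieldType} {m : nat} {A : 'M[K]_m} {lam : K} {p q : 'cV[K]_m}.
Hypothesis eig_p : A *m p = lam *: p.
Hypothesis eig_q : A^T *m q = lam *: q.
Hypothesis qp1 : dotv q p = 1.
Hypothesis ker_shift : forall w, A *m w - lam *: w = 0 -> exists a, w = a *: p.
Hypothesis range_shift : forall v, dotv q v = 0 -> exists u, A *m u - lam *: u = v.

Let shift (w : 'cV[K]_m) : 'cV[K]_m := A *m w - lam *: w.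

Lemma shift_lin (a : K) (x y : 'cV[K]_m) : shift (a *: x + y) = a *: shift x + shift y.
Proof.
rewrite /shift mulmxDr -scalemxAr scalerDr scalerA mulrC -scalerA scalerBr opprD.
by rewrite addrACA.
Qed.

Lemma iter_shift_lin k (a : K) (x y : 'cV[K]_m) :
  iter k shift (a *: x + y) = a *: iter k shift x + iter k shift y.
Proof. by elim: k => //= k ->; rewrite shift_lin. Qed.

Lemma iter_shift0 k : iter k shift 0 = 0.
Proof. by elim: k => //= k ->; rewrite /shift mulmx0 scaler0 subrr. Qed.

Lemma shift_p : shift p = 0.
Proof. by rewrite /shift eig_p subrr. Qed.

Lemma dotv_shift w : dotv q (shift w) = 0.
Proof.
rewrite !dotvE mulmxBr mulmxA -[q^T *m A]trmxK trmx_mul trmxK eig_q.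
by rewrite -scalemxAr linearZ /= scalemxAl subrr mxE.
Qed.

Lemma project_away v : dotv q (- dotv q v *: p + v) = 0.
Proof. by rewrite dotv_lin qp1 mulr1 addNr. Qed.

Lemma shift_iter_inj k w : dotv q w = 0 -> iter k shift w = 0 -> w = 0.
Proof.
elim: k w => [//|k IH] w qw; rewrite iterSr => /(IH _ (dotv_shift w)) /ker_shift [a Ew].
by move: qw; rewrite Ew dotvZ qp1 mulr1 => ->; rewrite scale0r.
Qed.

Lemma shift_iter_onto k v : dotv q v = 0 ->
  exists u, dotv q u = 0 /\ v = iter k shift u.
Proof.
elim: k v => [|k IH] v qv; first by exists v.
have [u1 [qu1 ->]] := IH v qv; have [u0 su0] := range_shift _ qu1.
exists (- dotv q u0 *: p + u0); split; first exact: project_away.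
by rewrite iterSr shift_lin shift_p scaler0 add0r -su0.
Qed.

Lemma simple_spectral_projection :
  is_spectral_projection A lam (fun v => dotv q v *: p).
Proof.
(* The dimension m is positive since q.p = 1, so the m-th shift kills p and
   has range in q^perp. *)
have m_gt0 : (0 < m)%N.
  rewrite lt0n; apply/negP => /eqP m0; have := qp1.
  rewrite /dotv big1 => [/esym/eqP|i _]; first by rewrite oner_eq0.
  by have := leq_trans (ltn_ord i) (eq_leq m0).
have powE v : shiftpow A lam v = iter m shift v by [].
have powS v : iter m shift v = shift (iter m.-1 shift v) by rewrite -iterS prednK.
have pow_p : iter m shift p = 0.
  have -> : iter m shift p = iter m.-1 shift (shift p) by rewrite -iterSr prednK.
  by rewrite shift_p iter_shift0.
split.
- by move=> a u v; rewrite dotv_lin scalerDl scalerA.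
- by move=> v; rewrite dotvZ qp1 mulr1.
- move=> v; rewrite powE; split.
    by move=> [u ->]; rewrite -[_ *: p]addr0 iter_shift_lin pow_p iter_shift0 scaler0 addr0.
  move=> pow_v; exists v.
  suff /eqP : - dotv q v *: p + v = 0 by rewrite scaleNr addrC subr_eq0 => /eqP.
  apply: (shift_iter_inj m _ (project_away v)).
  by rewrite iter_shift_lin pow_p pow_v scaler0 addr0.
- move=> v; split; last first.
    by move=> [w ->]; rewrite powE powS dotv_shift scale0r.
  move=> /(congr1 (dotv q)); rewrite dotvZ qp1 mulr1 (dotvE q 0) mulmx0 mxE => qv.
  by have [u [_ ->]] := shift_iter_onto m _ qv; exists u.
Qed.

End SimpleEigenvalue.

Lemma invmxN {K : fieldType} {m : nat} (A : 'M[K]_m) :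
  A \in unitmx -> invmx (- A) = - invmx A.
Proof.
by move=> unitA; rewrite -scaleN1r invmxZ ?unitmxZ ?unitrN1 // invrN invr1 scaleN1r.
Qed.

Lemma trmx11 {K : Type} (B : 'M[K]_1) : B^T = B.
Proof. by apply/matrixP => i j; rewrite !ord1 mxE. Qed.

Section BorderedEigenvalue.
Context {K : fieldType} {n : nat} {c0 lam d1 : K} {c : 'rV[K]_n} {b : 'cV[K]_n}
  {D : 'M[K]_n}.
Let M := invmx (D - lam%:M).
Let A := bordered c0 c b D.
Let p : 'cV[K]_(1 + n) := col_mx 1%:M (M *m b).
Let q : 'cV[K]_(1 + n) := col_mx d1^-1%:M (d1^-1 *: (invmx (lam%:M - D^T) *m c^T)).
Hypothesis unit_shift : D - lam%:M \in unitmx.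
Hypothesis char_root : bordered_char c0 c b D lam = 0.
Hypothesis d1_def : d1 = 1 - (c *m (M *m (M *m b))) 0 0.
Hypothesis d1_neq0 : d1 != 0.

Lemma resolventN : invmx (lam%:M - D) = - M.
Proof. by rewrite -opprB invmxN. Qed.

Lemma resolvent_tr : (invmx (lam%:M - D^T))^T = - M.
Proof. by rewrite trmx_inv linearB /= tr_scalar_mx trmxK resolventN. Qed.

Lemma unit_shift_tr : lam%:M - D^T \in unitmx.
Proof.
rewrite -unitmx_tr linearB /= tr_scalar_mx trmxK -opprB -scaleN1r unitmxZ //.
exact: unitrN1.
Qed.

Lemma lam_eq : lam = c0 + (c *m (M *m b)) 0 0.
Proof. by apply/eqP; rewrite -subr_eq0 -char_root. Qed.

Lemma bordered_shift (w : 'cV[K]_(1 + n)) : A *m w - lam *: w =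
  col_mx (c0%:M *m usubmx w + c *m dsubmx w - lam *: usubmx w)
         (- b *m usubmx w + D *m dsubmx w - lam *: dsubmx w).
Proof.
rewrite -[w]vsubmxK col_mxKu col_mxKd /A mul_block_col scale_col_mx opp_col_mx.
by rewrite add_col_mx.
Qed.

Lemma bordered_eigvec : A *m p = lam *: p.
Proof.
rewrite /A /p mul_block_col scale_col_mx; congr col_mx.
  by rewrite mulmx1 [c *m _]mx11_scalar -raddfD /= scalemx1 -lam_eq.
have shift_Mb : D *m (M *m b) - lam *: (M *m b) = b.
  by rewrite -mul_scalar_mx -mulmxBl mulmxA mulmxV // mul1mx.
by rewrite mul_mx_scalar scale1r -[X in - X]shift_Mb opprB subrK.
Qed.

Lemma bordered_left_eigvec : A^T *m q = lam *: q.
Proof.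
rewrite /A /q tr_block_mx mul_block_col scale_col_mx; congr col_mx.
  have E : (- b)^T *m (invmx (lam%:M - D^T) *m c^T) = c *m (M *m b).
    rewrite -[invmx _]trmxK resolvent_tr -trmx_mul -trmx_mul trmx11.
    by rewrite !mulmxN !mulNmx opprK mulmxA.
  rewrite tr_scalar_mx mul_scalar_mx -scalemxAr E [c *m _]mx11_scalar.
  rewrite !scale_scalar_mx -raddfD /=; congr (_%:M).
  by rewrite lam_eq mulrDl [d1^-1 * _]mulrC.
set Y := invmx (lam%:M - D^T) *m c^T.
have EY : lam *: Y - D^T *m Y = c^T.
  by rewrite -mul_scalar_mx -mulmxBl /Y mulmxA mulmxV ?unit_shift_tr // mul1mx.
by rewrite mul_mx_scalar -scalemxAr -EY -scalerDr subrK scalerA mulrC -scalerA.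
Qed.

(* The normalization q.p = 1 is the formula for d1. *)
Lemma bordered_normalized : dotv q p = 1.
Proof.
rewrite dotvE /q /p tr_col_mx mul_row_col linearZ /= trmx_mul trmxK resolvent_tr.
rewrite tr_scalar_mx mulmx1 -scalemxAl mulmxN mulNmx -mulmxA [c *m _]mx11_scalar.
rewrite scalerN scale_scalar_mx -raddfN -raddfD /= mxE mulr1n -mulrN -{1}[d1^-1]mulr1.
by rewrite -mulrDr -d1_def mulVf.
Qed.

Lemma bordered_projection_coef (v : 'cV[K]_(1 + n)) :
  d1^-1 * (usubmx v 0 0 + (c *m (invmx (lam%:M - D) *m dsubmx v)) 0 0) = dotv q v.
Proof.
rewrite dotvE /q -[in RHS](vsubmxK v) tr_col_mx mul_row_col linearZ /=.
rewrite trmx_mul trmxK resolvent_tr resolventN tr_scalar_mx mul_scalar_mx -scalemxAl.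
by rewrite [RHS]mxE [X in _ = X + _]mxE [X in _ = _ + X]mxE mulrDr mulmxA.
Qed.

Lemma bordered_kernel (w : 'cV[K]_(1 + n)) :
  A *m w - lam *: w = 0 -> exists a, w = a *: p.
Proof.
rewrite bordered_shift -(col_mx0 _ 1 n 1) => /eq_col_mx [_ Ebot].
set a := usubmx w 0 0; have Eu : usubmx w = a%:M by exact: mx11_scalar.
have Ed : dsubmx w = a *: (M *m b).
  have : (D - lam%:M) *m dsubmx w = a *: b.
    apply/eqP; rewrite -subr_eq0 -Ebot Eu mul_mx_scalar scalerN mulmxBl mul_scalar_mx.
    by rewrite addrC addrA.
  by move=> /(congr1 (mulmx M)); rewrite mulmxA mulVmx // mul1mx scalemxAr.
by exists a; rewrite -[LHS](vsubmxK w) Ed Eu /p scale_col_mx scalemx1.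
Qed.

(* A - lam maps onto q^perp: solve with first coordinate 0. *)
Lemma bordered_range (v : 'cV[K]_(1 + n)) :
  dotv q v = 0 -> exists u, A *m u - lam *: u = v.
Proof.
rewrite -bordered_projection_coef resolventN => /eqP.
rewrite mulf_eq0 invr_eq0 (negbTE d1_neq0) /= mulNmx mulmxN mxE addr_eq0 => /eqP vtop.
exists (col_mx 0 (M *m dsubmx v)).
rewrite bordered_shift col_mxKu col_mxKd !mulmx0 scaler0 !add0r subr0.
rewrite -mul_scalar_mx -mulmxBl [(D - _) *m _]mulmxA mulmxV // mul1mx.
rewrite -[RHS](vsubmxK v); congr col_mx.
by rewrite [usubmx v]mx11_scalar [c *m _]mx11_scalar [usubmx v 0 0]mxE vtop !mxE opprK.
Qed.

Lemma bordered_spectral :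
  is_spectral_projection A lam (fun v => dotv q v *: p).
Proof.
apply: simple_spectral_projection.
- exact: bordered_eigvec.
- exact: bordered_left_eigvec.
- exact: bordered_normalized.
- exact: bordered_kernel.
- exact: bordered_range.
Qed.

End BorderedEigenvalue.

Lemma resolvent_identity {K : fieldType} {n : nat} (D : 'M[K]_n) (z lam : K) :
  D - z%:M \in unitmx -> D - lam%:M \in unitmx ->
  invmx (D - z%:M) - invmx (D - lam%:M)
  = (z - lam) *: (invmx (D - z%:M) *m invmx (D - lam%:M)).
Proof.
move=> unit_z unit_lam; set Rz := invmx (D - z%:M); set Rl := invmx (D - lam%:M).
have -> : Rz - Rl = Rz *m ((D - lam%:M) - (D - z%:M)) *m Rl.
  by rewrite mulmxBr mulmxBl mulVmx // mul1mx -!mulmxA mulmxV // mulmx1.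
have -> : (D - lam%:M) - (D - z%:M) = (z - lam)%:M.
  by rewrite opprB addrC addrA subrK raddfB.
by rewrite mul_mx_scalar -scalemxAl.
Qed.

(* Cramer's rule: the entries c (D - (h + lam))^-1 w are quotients of
   polynomials in h, whose denominator vanishes exactly at singular shifts. *)
Lemma resolvent_entry_rational {K : fieldType} {n : nat} (D : 'M[K]_n) (lam : K)
  (c : 'rV[K]_n) (w : 'cV[K]_n) :
  exists P Q : {poly K}, forall h : K,
    (D - (h + lam)%:M \in unitmx) = (P.[h] != 0) /\
    (P.[h] != 0 -> (c *m (invmx (D - (h + lam)%:M) *m w)) 0 0 = Q.[h] / P.[h]).
Proof.
pose pencil : 'M[{poly K}]_n := map_mx polyC (D - lam%:M) - 'X%:M.
have evalC m k (B : 'M[K]_(m, k)) h : map_mx (horner_eval h) (map_mx polyC B) = B.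
  by apply/matrixP => i j; rewrite !mxE /= horner_evalE hornerC.
have eval_pencil h : map_mx (horner_eval h) pencil = D - (h + lam)%:M.
  rewrite /pencil map_mxB map_scalar_mx evalC /= horner_evalE hornerX.
  by rewrite raddfD /= opprD addrA addrAC.
pose num := map_mx polyC c *m \adj pencil *m map_mx polyC w.
exists (\det pencil), (num 0 0) => h.
have detE : (\det pencil).[h] = \det (D - (h + lam)%:M).
  by rewrite -eval_pencil det_map_mx /= horner_evalE.
split=> [|det_neq0]; first by rewrite unitmxE unitfE detE.
have unit_h : D - (h + lam)%:M \in unitmx by rewrite unitmxE unitfE -detE.
have -> : (num 0 0).[h] = map_mx (horner_eval h) num 0 0.
  by rewrite [RHS]mxE horner_evalE.
rewrite !map_mxM map_mx_adj eval_pencil.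
by rewrite !evalC detE /invmx unit_h -scalemxAl -scalemxAr [LHS]mxE mulrC mulmxA.
Qed.

Section PolynomialContinuity.
Context {K : numFieldType}.
Local Open Scope classical_set_scope.

Lemma horner_cvg (p : {poly K}) (z : K) :
  (fun x : K^o => (p.[x] : K^o)) @ z --> (p.[z] : K^o).
Proof.
elim/poly_ind: p => [|p a IH].
  under eq_fun do rewrite horner0.
  by rewrite horner0; apply: cvg_cst; exact: nbhs_filter.
under eq_fun do rewrite hornerMXaddC.
by rewrite hornerMXaddC; exact: (cvgD (cvgM IH cvg_id) (cvg_cst (a : K^o))).
Qed.

Lemma horner_near_neq0 {P : {poly K}} {z : K} :
  P.[z] != 0 -> \forall h \near (z : K^o), P.[h] != 0.
Proof.
move=> Pz; have Pz_pos : 0 < `|P.[z]| by rewrite normr_gt0.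
have /cvgr_dist_lt /(_ _ Pz_pos) := horner_cvg P z.
by apply: filterS => h; apply: contraTneq => ->; rewrite subr0 ltxx.
Qed.

End PolynomialContinuity.

Section ResolventDerivative.
Context {K : numFieldType} {n : nat} {D : 'M[K]_n} {lam : K}.
Hypothesis unit_lam : D - lam%:M \in unitmx.
Local Open Scope classical_set_scope.

Lemma unit_shift_near : \forall h \near (0 : K^o), D - (h + lam)%:M \in unitmx.
Proof.
have [P [Q PQ]] := resolvent_entry_rational D lam 0 0.
have P0 : P.[0] != 0 by have [<- _] := PQ 0; rewrite add0r.
by move: (horner_near_neq0 P0); apply: filterS => h; have [-> _] := PQ h.
Qed.

Lemma resolvent_entry_cvg (c : 'rV[K]_n) (w : 'cV[K]_n) :
  (fun h : K^o => ((c *m (invmx (D - (h + lam)%:M) *m w)) 0 0 : K^o)) @ (0 : K^o)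
  --> ((c *m (invmx (D - lam%:M) *m w)) 0 0 : K^o).
Proof.
have [P [Q PQ]] := resolvent_entry_rational D lam c w.
have P0 : P.[0] != 0 by have [<- _] := PQ 0; rewrite add0r.
have -> : (c *m (invmx (D - lam%:M) *m w)) 0 0 = Q.[0] / P.[0].
  by have [_ /(_ P0)] := PQ 0; rewrite add0r.
apply: (cvg_trans _ (cvgM (horner_cvg Q 0) (cvgV P0 (horner_cvg P 0)))).
apply: (near_eq_cvg (F := nbhs (0 : K^o))); move: (horner_near_neq0 P0).
apply: filterS => h Ph.
by have [_ /(_ Ph) ->] := PQ h.
Qed.

(* The difference quotient at lam is 1 - c R(lam + h) M b. *)
Lemma bordered_char_deriv {c0 : K} {c : 'rV[K]_n} {b : 'cV[K]_n} {d : K} :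
  is_derive (lam : K^o) (1 : K^o) (bordered_char c0 c b D : K^o -> K^o) (d : K^o) ->
  d = 1 - (c *m (invmx (D - lam%:M) *m (invmx (D - lam%:M) *m b))) 0 0.
Proof.
move=> [_ <-]; set M := invmx (D - lam%:M).
pose entry (h : K) := (c *m (invmx (D - (h + lam)%:M) *m (M *m b))) 0 0.
have quotE : {near (0 : K^o)^', (fun h : K^o => (1 - entry h : K^o)) =1
    (fun h : K^o => h^-1 *: ((bordered_char c0 c b D \o shift lam) (h *: (1 : K^o))
                             - bordered_char c0 c b D lam))}.
  near=> h => /=; have h_neq0 : h != 0 by near: h; exact: nbhs_dnbhs_neq.
  have unit_h : D - (h + lam)%:M \in unitmx.
    by near: h; apply: cvg_within; exact: unit_shift_near.
  rewrite [h *: 1]mulr1 /bordered_char /entry.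
  have -> : forall x y : K, h + lam - (c0 + x) - (lam - (c0 + y)) = h - (x - y).
    by move=> x y; ring.
  have -> : forall A B : 'M[K]_1, A 0 0 - B 0 0 = (A - B) 0 0 by move=> A B; rewrite !mxE.
  rewrite -mulmxBr -mulmxBl resolvent_identity // addrK -scalemxAl -scalemxAr.
  rewrite [in RHS]mxE -mulmxA -/M -[h^-1 *: _]/(h^-1 * _).
  by field.
rewrite /derive; apply: (cvg_lim (@norm_hausdorff _ _)).
apply: cvg_trans (near_eq_cvg quotE) _.
apply: cvgB; first exact: cvg_cst.
by apply: cvg_within_filter; exact: resolvent_entry_cvg.
Unshelve. all: by end_near.
Qed.

End ResolventDerivative.

Section RealParameterDerivative.
Context {R : realType}.
Local Open Scope classical_set_scope.

Lemma derivRC_unique {F : R -> R[i]} {a : R} {d d' : R[i]} :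
  has_derivRC F a d -> has_derivRC F a d' -> d = d'.
Proof.
move=> /(cvg_lim (@norm_hausdorff _ _)) <- /(cvg_lim (@norm_hausdorff _ _)) <-.
by [].
Qed.

Lemma derivRC_const {F : R -> R[i]} {a : R} {d : R[i]} :
  (forall x, F x = F a) -> has_derivRC F a d -> d = 0.
Proof.
move=> F_const /derivRC_unique; apply; rewrite /has_derivRC.
under eq_fun do rewrite F_const subrr mul0r.
exact: cvg_cst.
Qed.

Lemma derivRC_sum {I : Type} (r : seq I) (w : I -> R[i]) {G : I -> R -> R[i]}
  {a : R} {d : I -> R[i]} :
  (forall i, has_derivRC (G i) a (d i)) ->
  has_derivRC (fun x => \sum_(i <- r) G i x * w i) a (\sum_(i <- r) d i * w i).
Proof.
move=> dG; elim: r => [|i r IH]; rewrite /has_derivRC.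
  under eq_fun do rewrite !big_nil subrr mul0r.
  by rewrite big_nil; exact: cvg_cst.
have quot_split (u u' v v' z k : R[i]) :
  (u * z + v - (u' * z + v')) / k = (u - u') / k * z + (v - v') / k by ring.
under eq_fun do rewrite !big_cons quot_split.
by rewrite big_cons; exact: (cvgD (cvgM (dG i) (cvg_cst (w i : R[i]^o))) IH).
Qed.

Lemma derivRC_sub_from (l : R[i]) {F : R -> R[i]} {a : R} {d : R[i]} :
  has_derivRC F a d -> has_derivRC (fun x => l - F x) a (- d).
Proof.
rewrite /has_derivRC => dF.
have quot_opp (u v k : R[i]) : (l - u - (l - v)) / k = - ((u - v) / k) by ring.
under eq_fun do rewrite quot_opp.
exact: cvgN dF.
Qed.

(* In a family of bordered matrices where only the border depends on the
   parameter, only the first row of the derivative A' is nonzero, and it is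
   minus the derivative d2 of the characteristic function paired with (1, M b);
   this gives q.A' p = - d1^-1 d2 for any q with first entry d1^-1. *)
Lemma bordered_family_deriv {n : nat} (c0 : R -> R[i]) (c : R -> 'rV[R[i]]_n)
  (b : 'cV[R[i]]_n) (D : 'M[R[i]]_n) (alpha : R) (lam d1 d2 : R[i])
  (u : 'cV[R[i]]_n) (A' : 'M[R[i]]_(1 + n)) :
  has_derivM (fun a => bordered (c0 a) (c a) b D) alpha A' ->
  has_derivRC (fun a => bordered_char (c0 a) (c a) b D lam) alpha d2 ->
  dotv (col_mx d1^-1%:M u) (A' *m col_mx 1%:M (invmx (D - lam%:M) *m b))
  = - (d1^-1 * d2).
Proof.
move=> dA dchar; set p := col_mx 1%:M _; pose r0 := lshift n (0 : 'I_1).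
have d2E : d2 = - \sum_(k < 1 + n) A' r0 k * p k 0.
  apply: (derivRC_unique dchar); rewrite (funext (fun x => bordered_char_row _ _ _ _ _)).
  exact: (derivRC_sub_from lam (derivRC_sum _ (fun k => p k 0) (fun k => dA r0 k))).
have A'p_bottom i : (A' *m p) (rshift 1 i) 0 = 0.
  rewrite mxE big1 // => k _; suff -> : A' (rshift 1 i) k = 0 by rewrite mul0r.
  by apply: (derivRC_const _ (dA _ _)) => x; exact: bordered_bottom_rows.
by rewrite dotv_top_only // d2E mxE mulrN opprK.
Qed.

End RealParameterDerivative.

Theorem mainTheorem16 (R : realType) (n : nat) (th : 'I_n.+1 -> R)
  (L : R -> (R -> R) -> R) (alpha : R) (lam d1 : R[i]) :
  is_mesh th ->
  (forall a : R, bounded_linear_X (L a)) ->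
  Dmat th - lam%:M \in unitmx ->
  Deltan th (L alpha) lam = 0 ->
  has_derivC (Deltan th (L alpha)) lam d1 ->
  d1 != 0 ->
  let D := Dmat th in
  let p : 'cV[R[i]]_(1 + n) :=
    pairv 1 (invmx (D - lam%:M) *m (D *m @ones R n)) in
  let q : 'cV[R[i]]_(1 + n) :=
    pairv (d1^-1)
      (d1^-1 *: (invmx (lam%:M - D^T) *m
                 \col_(j < n) (L alpha (fun t => (lagr th (lift ord0 j)).[t]))%:C)) in
  [/\ (An th (L alpha))^T *m q = lam *: q,
      dotv q p = 1,
      is_spectral_projection (An th (L alpha)) lam
        (fun v => (d1^-1 * (top v + Lc (L alpha)
                     (Pn_fun th (invmx (lam%:M - D) *m bot v)))) *: p),
      (forall v : 'cV[R[i]]_(1 + n),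
         (d1^-1 * (top v + Lc (L alpha) (Pn_fun th (invmx (lam%:M - D) *m bot v))))
           *: p = dotv q v *: p)
    & (L_differentiable L ->
       forall (A' : 'M[R[i]]_(1 + n)) (d2 : R[i]),
         has_derivM (fun a => An th (L a)) alpha A' ->
         has_derivRC (fun a => Deltan th (L a) lam) alpha d2 ->
         dotv q (A' *m p) = - (d1^-1 * d2))].
Proof.
move=> _ L_bounded unit_lam Delta_root dDelta d1_neq0 D p q.
have AnE x := An_bordered th (L_bounded x).
have DeltaE x := Deltan_bordered th (L_bounded x).
set c0 := Lcoef th (L alpha) ord0; set c := Lrow th (L alpha); set b := D *m ones R n.
have qE : q = col_mx d1^-1%:M (d1^-1 *: (invmx (lam%:M - D^T) *m c^T)).
  by congr (pairv _ (_ *: (_ *m _))); apply/matrixP => i j; rewrite !mxE.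
have char_root : bordered_char c0 c b D lam = 0 by rewrite -DeltaE.
have d1_def : d1 = 1 - (c *m (invmx (D - lam%:M) *m (invmx (D - lam%:M) *m b))) 0 0.
  by move: dDelta; rewrite /has_derivC DeltaE => /(bordered_char_deriv unit_lam).
have projE v : d1^-1 * (top v + Lc (L alpha) (Pn_fun th (invmx (lam%:M - D) *m bot v)))
               = dotv q v.
  by rewrite (Lc_Pn th (L_bounded alpha)) qE (bordered_projection_coef unit_lam).
split.
- by rewrite AnE qE; apply: bordered_left_eigvec.
- by rewrite qE; apply: bordered_normalized.
- rewrite (_ : (fun v => _) = (fun v => dotv q v *: p)); last first.
    by apply/funext => v; rewrite projE.
  by rewrite AnE qE; apply: bordered_spectral.
- by move=> v; rewrite projE.
move=> _ A' d2; rewrite (funext AnE) (funext (fun x => congr1 (@^~ lam) (DeltaE x))).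
exact: bordered_family_deriv.
Qed.
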